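(* Let $S$ be a semigroup of transformations of a finite set $\Omega$, and suppose $S$ contains a permutation group $G$ that is primitive on $\Omega$. Suppose the minimum rank of an element of $S$ is $r$, where $r>1$. Then $S$ contains no element of rank $r+1$.
   Context: The rank of a transformation $h$ is $|\Omega h|$. A permutation group is primitive if it is transitive and preserves no equivalence relation other than equality and the universal relation. *)

From mathcomp Require Import all_boot all_fingroup all_solvable.
Set Implicit Arguments. Unset Strict Implicit. Unset Printing Implicit Defensive.

Definition tcomp (T : finType) (f g : {ffun T -> T}) : {ffun T -> T} :=
  [ffun x => g (f x)].

Definition trank (T : finType) (h : {ffun T -> T}) : nat := #|h @: [set: T]|.

Definition is_tsemigroup (T : finType) (S : {set {ffun T -> T}}) : Prop :=
  forall f g, f \in S -> g \in S -> tcomp f g \in S.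

Definition perm_tr (T : finType) (p : {perm T}) : {ffun T -> T} := [ffun x => p x].

(* Let h in S have the minimal rank r, with image A, and f in S rank r+1, with
   image B. Minimality forces h to be injective on k(A) for every k in S, and
   |k(A)| = r. By transitivity every point of B lies in some f(g(A)), an
   r-subset of B; hence if h identifies two points b1 != b2 of B, then for every
   g in G the map h o g is injective on B \ b1 and on B \ b2. As h o g cannot be
   injective on B (|B| > |A|), it identifies b1 and b2. So "h o g agrees at y and
   z for every g in G" is a G-invariant equivalence relating two distinct
   points; by primitivity it is universal, and h would have rank 1. *)

From mathcomp Require Import all_boot all_fingroup all_solvable.
Set Implicit Arguments. Unset Strict Implicit. Unset Printing Implicit Defensive.

Section PrimitiveEquivalence.
Local Open Scope group_scope.

Variables (aT : finGroupType) (T : finType) (G : {group aT}).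
Variables (to : {action aT &-> T}) (R : rel T).
Hypotheses (R_equiv : equivalence_rel R)
  (R_invariant : {in G, forall a, {homo to^~ a : x y / R x y}}).

Local Notation class x := [set y in [set: T] | R x y].

Lemma invariant_equivE a x y : a \in G -> R (to x a) (to y a) = R x y.
Proof.
move=> Ga; apply/idP/idP => [|/R_invariant-> //].
by move/(R_invariant (groupVr Ga)); rewrite !actK.
Qed.

Lemma setact_equiv_class a x : a \in G -> (to^*)%act (class x) a = class (to x a).
Proof.
move=> Ga; apply/setP => y; rewrite /= setactE [RHS]inE in_setT /=.
apply/imsetP/idP => [[z] | Rxy].
  by rewrite !inE => Rxz ->; rewrite invariant_equivE.
by exists (to y a^-1); rewrite ?actKV // !inE -(invariant_equivE _ _ Ga) actKV.
Qed.

Lemma acts_equivalence_partition :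
  [acts G, on equivalence_partition R [set: T] | to^*].
Proof.
apply/actsP => a Ga X; apply/imsetP/imsetP => -[x _ defX].
  by exists (to x a^-1); rewrite // -(actK to^* a X) defX setact_equiv_class ?groupV.
by exists (to x a); rewrite // defX setact_equiv_class.
Qed.

Lemma primitive_equivalence_total x y :
  [primitive G, on [set: T] | to] -> x != y -> R x y -> forall u v, R u v.
Proof.
(* The classes of R form a G-invariant partition with fewer blocks than points. *)
move=> /andP[_ /existsPn/(_ (equivalence_partition R [set: T]))] noQ nxy Rxy.
have eqvR : {in [set: T] & &, equivalence_rel R} by move=> *; apply: R_equiv.
have classRxy : class x = class y.
  by apply/setP => z; rewrite !inE; case: (R_equiv x y z) => _ ->.
have ltQ : #|equivalence_partition R [set: T]| < #|[set: T]|.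
  rewrite ltn_neqAle leq_imset_card andbT; apply: contra nxy => /imset_injP injQ.
  by apply/eqP/injQ.
move: noQ; rewrite /imprimitivity_system (equivalence_partitionP eqvR).
rewrite acts_equivalence_partition ltQ andbT -leqNgt => /card_le1_eqP Q1 u v.
have Qu : class u \in equivalence_partition R [set: T] by apply: imset_f.
have Qv : class v \in equivalence_partition R [set: T] by apply: imset_f.
by move/setP/(_ v): (Q1 _ _ Qu Qv); rewrite !inE /= => <-; case: (R_equiv v v v).
Qed.

End PrimitiveEquivalence.

Lemma in_injective_setD1 (aT : finType) (rT : eqType) (F : aT -> rT) (D : {set aT}) a b :
    {in D :\ a &, injective F} -> {in D :\ b &, injective F} -> F a != F b ->
  {in D &, injective F}.
Proof.
move=> injDa injDb nFab x y Dx Dy Fxy; apply/eqP/negP => nxy.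
have Fx z : {in D :\ z &, injective F} -> F z = F x.
  move=> injDz; have [-> // | xz] := eqVneq x z; have [<- // | yz] := eqVneq y z.
  by move: nxy; rewrite (injDz x y) ?inE ?xz ?yz ?eqxx.
by move: nFab; rewrite (Fx a injDa) (Fx b injDb) eqxx.
Qed.

Lemma imset_tcomp (T : finType) (f g : {ffun T -> T}) (Y : {set T}) :
  tcomp f g @: Y = g @: (f @: Y).
Proof. by rewrite -imset_comp; apply: eq_imset => x; rewrite ffunE. Qed.

Lemma imset_perm_tr (T : finType) (g : {perm T}) (Y : {set T}) :
  perm_tr g @: Y = g @: Y.
Proof. by apply: eq_imset => x; rewrite ffunE. Qed.

Section MinimalRank.

Variables (T : finType) (S : {set {ffun T -> T}}) (h : {ffun T -> T}).
Hypotheses (S_semigroup : is_tsemigroup S) (hS : h \in S)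
  (h_minrank : forall k, k \in S -> trank h <= trank k).

Local Notation A := (h @: [set: T]).

Lemma card_minrank_imset_comp k : k \in S -> #|h @: (k @: A)| = trank h.
Proof.
move=> kS; apply/eqP; rewrite eqn_leq.
have := h_minrank (S_semigroup (S_semigroup hS kS) hS).
rewrite /trank !imset_tcomp => ->.
by rewrite (leq_trans (leq_imset_card _ _)) ?leq_imset_card.
Qed.

Lemma card_minrank_image k : k \in S -> #|k @: A| = trank h.
Proof.
move=> kS; apply/eqP; rewrite eqn_leq leq_imset_card.
by rewrite -{1}(card_minrank_imset_comp kS) leq_imset_card.
Qed.

Lemma minrank_injective k : k \in S -> {in k @: A &, injective h}.
Proof.
by move=> kS; apply/imset_injP; rewrite card_minrank_imset_comp ?card_minrank_image.
Qed.

Variables (G : {group {perm T}}) (f : {ffun T -> T}).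
Hypotheses (G_sub : forall g, g \in G -> perm_tr g \in S)
  (G_trans : [transitive G, on [set: T] | 'P])
  (fS : f \in S) (f_rank : trank f = (trank h).+1).

Local Notation B := (f @: [set: T]).

Lemma minrank_perm_injective k g :
  k \in S -> g \in G -> {in k @: A &, injective (fun x => h (g x))}.
Proof.
move=> kS Gg x y kAx kAy hxy; apply: (@perm_inj _ g).
apply: (minrank_injective (S_semigroup kS (G_sub Gg))) => //;
  by rewrite imset_tcomp imset_perm_tr imset_f.
Qed.

Lemma minrank_comp_not_dinjective (u : T -> T) :
  ~~ dinjectiveb (fun x => h (u x)) B.
Proof.
apply/dinjectiveP => /card_in_imset; apply/eqP; rewrite neq_ltn; apply/orP; left.
rewrite -[#|B|]/(trank f) f_rank ltnS; apply: subset_leq_card.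
by apply/subsetP => _ /imsetP[x _ ->]; apply: imset_f.
Qed.

Lemma mem_translate_image b :
  b \in B -> exists2 g, g \in G & b \in tcomp (perm_tr g) f @: A.
Proof.
case/imsetP => x _ ->; have [g Gg xg] := atransP2 G_trans (in_setT (h x)) (in_setT x).
by exists g; rewrite // imset_tcomp imset_perm_tr xg /= /aperm !imset_f.
Qed.

Lemma injective_off_collapse b b' g :
    b \in B -> b' \in B -> b != b' -> h b = h b' -> g \in G ->
  {in B :\ b' &, injective (fun x => h (g x))}.
Proof.
move=> bB b'B nbb' hbb' Gg; have [g' Gg' bX] := mem_translate_image bB.
set k := tcomp (perm_tr g') f in bX; have kS : k \in S := S_semigroup (G_sub Gg') fS.
(* k(A) is an r-subset of B on which h is injective, so it is exactly B :\ b'. *)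
have b'X : b' \notin k @: A.
  by apply: contra nbb' => b'X; rewrite (minrank_injective kS bX b'X hbb').
suff <- : k @: A = B :\ b' by apply: minrank_perm_injective.
have cardBb' : #|B :\ b'| = trank h.
  by apply/eqP; rewrite -eqSS -f_rank [trank f](cardsD1 b') b'B.
apply/eqP; rewrite eqEcard card_minrank_image // cardBb' leqnn andbT.
apply/subsetP => _ /imsetP[x xA ->]; rewrite !inE; apply/andP; split.
  by apply: contraNneq b'X => <-; rewrite imset_f.
by rewrite ffunE imset_f.
Qed.

Lemma collapse_invariant b1 b2 g :
    b1 \in B -> b2 \in B -> b1 != b2 -> h b1 = h b2 -> g \in G ->
  h (g b1) = h (g b2).
Proof.
move=> b1B b2B nb hb Gg; apply/eqP; apply: contraNT (minrank_comp_not_dinjective g).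
move=> ngb; apply/dinjectiveP.
apply: (in_injective_setD1 (F := fun x => h (g x)) _ _ ngb).
  by apply: injective_off_collapse b2B b1B _ (esym hb) Gg; rewrite eq_sym.
exact: injective_off_collapse b1B b2B nb hb Gg.
Qed.

End MinimalRank.

Theorem corollary13 (T : finType) (S : {set {ffun T -> T}})
    (G : {group {perm T}}) (r : nat) :
  is_tsemigroup S ->
  (forall g, g \in G -> perm_tr g \in S) ->
  [primitive G, on [set: T] | 'P] ->
  (exists2 h, h \in S & trank h = r) ->
  (forall h, h \in S -> r <= trank h) ->
  1 < r ->
  ~ (exists2 h, h \in S & trank h = r.+1).
Proof.
move=> S_semigroup G_sub G_prim [h hS <-] h_minrank rank_gt1 [f fS f_rank].
have G_trans : [transitive G, on [set: T] | 'P] by case/andP: G_prim.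
have /dinjectivePn[b1 b1B [b2 /andP[nb b2B] hb]] :=
  minrank_comp_not_dinjective f_rank id.
rewrite eq_sym in nb.
pose R := [rel y z | [forall g in G, h (g y) == h (g z)]].
have R_equiv : equivalence_rel R.
  move=> x y z; split=> [|/forall_inP Rxy]; first by apply/forall_inP.
  by apply: eq_forallb_in => g Gg; rewrite (eqP (Rxy g Gg)).
have R_invariant : {in G, forall a, {homo 'P%act^~ a : x y / R x y}}.
  move=> a Ga x y /forall_inP Rxy; apply/forall_inP => g Gg.
  by rewrite /= /aperm -!permM; apply: Rxy; rewrite groupM.
have Rb : R b1 b2.
  apply/forall_inP => g Gg; apply/eqP.
  exact (collapse_invariant S_semigroup hS h_minrank G_sub G_trans fS f_rank
           b1B b2B nb hb Gg).
have R_total := primitive_equivalence_total R_equiv R_invariant G_prim nb Rb.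
have : trank h <= 1.
  rewrite /trank -(cards1 (h b1)); apply: subset_leq_card.
  apply/subsetP => _ /imsetP[x _ ->]; rewrite inE.
  by move/forall_inP/(_ 1%g (group1 G)): (R_total x b1); rewrite !perm1.
by rewrite leqNgt rank_gt1.
Qed.
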